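(* A compact Hausdorff space $X$ belongs to the class $\mathcal A$ if and only if $X$ is scattered and hereditarily paracompact.
   Context: A topological space is scattered if each nonempty subspace has an isolated point. For a locally compact Hausdorff space $Y$, an Aleksandrov compactification of $Y$ is a compactification $\overline Y$ of $Y$ with $|\overline Y\setminus Y|\le 1$. The class $\mathcal A$ is the smallest class of compact spaces that contains the empty space and the one-point space and is closed under taking the Aleksandrov compactification of a topological sum $\bigoplus_{i\in I}K_i$ of any family $\{K_i\}_{i\in I}$ of spaces from $\mathcal A$. *)

From Stdlib Require Import List Classical FunctionalExtensionality PropExtensionality.
Import ListNotations.

Set Implicit Arguments.
Unset Strict Implicit.

Record space := Space {
  pt :> Type;
  open : (pt -> Prop) -> Prop;
  open_full : open (fun _ => True);
  open_inter : forall U V, open U -> open V -> open (fun x => U x /\ V x);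
  open_union : forall F : (pt -> Prop) -> Prop,
      (forall U, F U -> open U) -> open (fun x => exists U, F U /\ U x)
}.

Arguments open {s} _.

Definition sub_open (X : space) (S : X -> Prop) (V : {x | S x} -> Prop) : Prop :=
  exists U, open U /\ forall y : {x | S x}, V y <-> U (proj1_sig y).
Arguments sub_open {X} S V.

Lemma sub_open_full (X : space) (S : X -> Prop) : sub_open S (fun _ => True).
Proof. exists (fun _ => True); split; [apply open_full | tauto]. Qed.

Lemma sub_open_inter (X : space) (S : X -> Prop) U V :
  sub_open S U -> sub_open S V -> sub_open S (fun x => U x /\ V x).
Proof.
  intros [U' [HU EU]] [V' [HV EV]]. exists (fun x => U' x /\ V' x).
  split; [apply open_inter; auto|]. intro y; rewrite EU, EV; tauto.
Qed.

Lemma sub_open_union (X : space) (S : X -> Prop) (F : ({x | S x} -> Prop) -> Prop) :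
  (forall U, F U -> sub_open S U) -> sub_open S (fun x => exists U, F U /\ U x).
Proof.
  intros HF.
  exists (fun x => exists W, (open W /\ exists U, F U /\
              forall y : {x | S x}, U y <-> W (proj1_sig y)) /\ W x).
  split.
  - apply (@open_union _ (fun W => open W /\ exists U, F U /\
              forall y : {x | S x}, U y <-> W (proj1_sig y))). tauto.
  - intro y; split.
    + intros [U [FU Uy]]. destruct (HF U FU) as [W [HW EW]].
      exists W. split; [split; [auto | exists U; auto] | apply EW; auto].
    + intros [W [[HW [U [FU EU]]] Wy]]. exists U; split; auto. apply EU; auto.
Qed.

Definition subspace (X : space) (S : X -> Prop) : space :=
  @Space {x | S x} (sub_open S) (sub_open_full S) (@sub_open_inter X S)
         (@sub_open_union X S).

Definition sum_open (I : Type) (K : I -> space) (V : {i : I & pt (K i)} -> Prop) : Prop :=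
  forall i, open (fun x : K i => V (existT _ i x)).
Arguments sum_open {I} K V.

Lemma sum_open_full (I : Type) (K : I -> space) : sum_open K (fun _ => True).
Proof. intro i; apply open_full. Qed.

Lemma sum_open_inter (I : Type) (K : I -> space) U V :
  sum_open K U -> sum_open K V -> sum_open K (fun x => U x /\ V x).
Proof. intros HU HV i; apply open_inter; auto. Qed.

Lemma sum_open_union (I : Type) (K : I -> space) (F : ({i : I & pt (K i)} -> Prop) -> Prop) :
  (forall U, F U -> sum_open K U) -> sum_open K (fun x => exists U, F U /\ U x).
Proof.
  intros HF i.
  assert (E : (fun x : K i => exists U, F U /\ U (existT _ i x)) =
              (fun x => exists W, (exists U, F U /\ W = (fun y : K i => U (existT _ i y))) /\ W x)).
  { apply functional_extensionality; intro x; apply propositional_extensionality; split.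
    - intros [U [FU Ux]]. exists (fun y => U (existT _ i y)); split; eauto.
    - intros [W [[U [FU ->]] Wx]]. eauto. }
  simpl; rewrite E. apply open_union. intros W [U [FU ->]]. apply HF; auto.
Qed.

Definition sum_space (I : Type) (K : I -> space) : space :=
  @Space {i : I & pt (K i)} (sum_open K) (sum_open_full K) (@sum_open_inter I K)
         (@sum_open_union I K).

Definition hausdorff (X : space) : Prop :=
  forall x y : X, x <> y -> exists U V, open U /\ open V /\ U x /\ V y /\
    forall z, U z -> V z -> False.

Definition compact (X : space) : Prop :=
  forall (I : Type) (U : I -> X -> Prop), (forall i, open (U i)) ->
    (forall x, exists i, U i x) ->
    exists l : list I, forall x, exists i, In i l /\ U i x.

Definition isolated_in (X : space) (S : X -> Prop) (x : X) : Prop :=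
  S x /\ exists U, open U /\ U x /\ forall y, U y -> S y -> y = x.

Definition scattered (X : space) : Prop :=
  forall S : X -> Prop, (exists x, S x) -> exists x, isolated_in S x.

Definition locally_finite (X : space) (J : Type) (V : J -> X -> Prop) : Prop :=
  forall x : X, exists W, open W /\ W x /\ exists l : list J,
    forall j, (exists y, W y /\ V j y) -> In j l.

(** Paracompact: every open cover has a locally finite open refinement.
    (Hausdorffness is not built in.) *)
Definition paracompact (X : space) : Prop :=
  forall (I : Type) (U : I -> X -> Prop), (forall i, open (U i)) ->
    (forall x, exists i, U i x) ->
    exists (J : Type) (V : J -> X -> Prop),
      (forall j, open (V j)) /\ (forall x, exists j, V j x) /\
      (forall j, exists i, forall x, V j x -> U i x) /\
      locally_finite V.

Definition hereditarily_paracompact (X : space) : Prop :=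
  forall S : X -> Prop, paracompact (subspace S).

Definition embedding (Y Z : space) (e : Y -> Z) : Prop :=
  (forall y1 y2, e y1 = e y2 -> y1 = y2) /\
  (forall W, open W -> open (fun y => W (e y))) /\
  (forall V, open V -> exists W, open W /\ forall y, V y <-> W (e y)).

Definition aleksandrov_compactification (Y Z : space) (e : Y -> Z) : Prop :=
  compact Z /\ hausdorff Z /\ embedding e /\
  (forall W, open W -> (exists z, W z) -> exists y, W (e y)) /\
  (forall z1 z2 : Z, (forall y, e y <> z1) -> (forall y, e y <> z2) -> z1 = z2).

(** The class A (closed under homeomorphism, as a class of spaces). *)
Inductive classA : space -> Prop :=
| A_empty : forall X : space, (X -> False) -> classA X
| A_point : forall X : space, (exists x : X, forall y : X, y = x) -> classA X
| A_compactify : forall (I : Type) (K : I -> space) (Z : space)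
      (e : sum_space K -> Z),
    (forall i, classA (K i)) -> aleksandrov_compactification e -> classA Z.

From Stdlib Require Import List Classical FunctionalExtensionality PropExtensionality.
From Stdlib Require Import ProofIrrelevance ClassicalEpsilon.
From Stdlib Require Import Relations Operators_Properties Lia.
Import ListNotations.

(* Forward direction, by induction on the class: a subset of an Aleksandrov
   compactification either meets one of the (open) pieces or is the point at infinity,
   so isolated points come from the pieces; locally finite refinements on the pieces glue
   together, because the member of the cover containing the point at infinity misses
   only finitely many pieces by compactness.

   Backward direction: a compact Hausdorff scattered space is zero-dimensional, and the
   class is stable under passing to clopen subspaces and under compactifying a disjoint
   union of open pieces.  Call a set good if, as a subspace, it lies in the class.  If
   some point had no good clopen neighbourhood, pick an isolated such point p and a clopen
   neighbourhood W of p in which every other point has one.  Then W minus p is paracompact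
   and covered by compact open good sets, so it splits into disjoint clopen good pieces,
   and W is their Aleksandrov compactification.  Compactness finally covers the space by
   finitely many good clopen sets, and a finite union of good clopen sets is good. *)

Lemma sig_eq (A : Type) (P : A -> Prop) (a b : sig P) : proj1_sig a = proj1_sig b -> a = b.
Proof. destruct a, b; simpl; intros ->. apply subset_eq_compat; reflexivity. Qed.

Section OpenClosed.
Context {X : space}.

Lemma open_ext (U V : X -> Prop) : open U -> (forall x, U x <-> V x) -> open V.
Proof.
  intros HU H. replace V with U; auto.
  apply functional_extensionality; intro x; apply propositional_extensionality; apply H.
Qed.

Lemma open_Union (I : Type) (U : I -> X -> Prop) :
  (forall i, open (U i)) -> open (fun x => exists i, U i x).
Proof.
  intros H. apply open_ext with (fun x => exists W, (exists i, W = U i) /\ W x).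
  - apply open_union. intros W [i ->]; auto.
  - intro x; split.
    + intros [W [[i ->] Hx]]; eauto.
    + intros [i Hi]; exists (U i); eauto.
Qed.

Lemma open_empty : open (fun _ : X => False).
Proof.
  apply open_ext with (fun x => exists i : Empty_set, True).
  - apply open_Union; intros [].
  - intro x; split; [intros [[] _] | tauto].
Qed.

Lemma open_or (U V : X -> Prop) : open U -> open V -> open (fun x => U x \/ V x).
Proof.
  intros HU HV. apply open_ext with (fun x => exists b : bool, (if b then U else V) x).
  - apply open_Union; intros []; auto.
  - intro x; split.
    + intros [[] H]; auto.
    + intros [H|H]; [exists true|exists false]; auto.
Qed.

Lemma open_cond (P : Prop) (U : X -> Prop) : (P -> open U) -> open (fun x => P /\ U x).
Proof.
  intros H. destruct (classic P) as [p|np].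
  - apply open_ext with U; [auto|]. intro; tauto.
  - apply open_ext with (fun _ => False); [apply open_empty|]. intro; tauto.
Qed.

Lemma open_Union_cond (I : Type) (P : I -> Prop) (U : I -> X -> Prop) :
  (forall i, P i -> open (U i)) -> open (fun x => exists i, P i /\ U i x).
Proof. intros H. apply open_Union. intro i. apply open_cond; auto. Qed.

Lemma open_nbhd (A : X -> Prop) :
  (forall x, A x -> exists V, open V /\ V x /\ forall y, V y -> A y) -> open A.
Proof.
  intros H. apply open_ext with (fun x => exists W, (open W /\ forall y, W y -> A y) /\ W x).
  - apply open_union; tauto.
  - intro x; split.
    + intros [W [[_ HW] Wx]]; auto.
    + intros Ax. destruct (H x Ax) as [V [HV [Vx HVA]]]. exists V; auto.
Qed.

Lemma open_list_inter (T : Type) (l : list T) (G : T -> X -> Prop) :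
  (forall t, In t l -> open (G t)) -> open (fun x => forall t, In t l -> G t x).
Proof.
  induction l as [|a l IH]; intros H.
  - apply open_ext with (fun _ => True); [apply open_full|]. intro x; simpl; tauto.
  - apply open_ext with (fun x => G a x /\ forall t, In t l -> G t x).
    + apply open_inter; [apply H; simpl; auto|apply IH; intros; apply H; simpl; auto].
    + intro x; simpl; split.
      * intros [Ha Hl] t [<-|Ht]; auto.
      * intros Hx; split; auto.
Qed.

Definition closed (F : X -> Prop) := open (fun x => ~ F x).
Definition clopen (F : X -> Prop) := open F /\ closed F.

Lemma closed_ext (F G : X -> Prop) : closed F -> (forall x, F x <-> G x) -> closed G.
Proof. intros HF H. apply open_ext with (1 := HF). intro x; rewrite H; tauto. Qed.

Lemma closed_compl (U : X -> Prop) : open U -> closed (fun x => ~ U x).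
Proof. intros H. apply open_ext with (1 := H). intro; tauto. Qed.

Lemma closed_and (F G : X -> Prop) : closed F -> closed G -> closed (fun x => F x /\ G x).
Proof.
  intros HF HG. apply open_ext with (fun x => ~ F x \/ ~ G x); [apply open_or; auto|].
  intro x; tauto.
Qed.

Lemma closed_or (F G : X -> Prop) : closed F -> closed G -> closed (fun x => F x \/ G x).
Proof.
  intros HF HG. apply open_ext with (fun x => ~ F x /\ ~ G x); [apply open_inter; auto|].
  intro x; tauto.
Qed.

Lemma closed_empty : closed (fun _ => False).
Proof. apply open_ext with (fun _ => True); [apply open_full|tauto]. Qed.

Lemma closed_full : closed (fun _ => True).
Proof. apply open_ext with (fun _ => False); [apply open_empty|tauto]. Qed.

Lemma open_diff (U F : X -> Prop) : open U -> closed F -> open (fun x => U x /\ ~ F x).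
Proof. intros; apply open_inter; auto. Qed.

Lemma closed_diff (F U : X -> Prop) : closed F -> open U -> closed (fun x => F x /\ ~ U x).
Proof. intros; apply closed_and; auto. apply closed_compl; auto. Qed.

Lemma closed_Inter (I : Type) (F : I -> X -> Prop) :
  (forall i, closed (F i)) -> closed (fun x => forall i, F i x).
Proof.
  intros H. apply open_ext with (fun x => exists i, ~ F i x); [apply open_Union; auto|].
  intro x; split.
  - intros [i Hi] Hx; auto.
  - intros Hx. apply not_all_ex_not; auto.
Qed.

Lemma closed_list_union (T : Type) (l : list T) (F : T -> X -> Prop) :
  (forall t, In t l -> closed (F t)) -> closed (fun x => exists t, In t l /\ F t x).
Proof.
  induction l as [|a l IH]; intros H.
  - apply closed_ext with (fun _ => False); [apply closed_empty|]. intro; simpl; firstorder.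
  - apply closed_ext with (fun x => F a x \/ exists t, In t l /\ F t x).
    + apply closed_or; [apply H; simpl; auto|apply IH; intros; apply H; simpl; auto].
    + intro x; simpl; split.
      * intros [Ha|[t [Ht Hx]]]; eauto.
      * intros [t [[<-|Ht] Hx]]; eauto.
Qed.

Lemma closed_fin_union (T : Type) (P : T -> Prop) (l : list T) (F : T -> X -> Prop) :
  (forall t, P t -> In t l) -> (forall t, P t -> closed (F t)) ->
  closed (fun x => exists t, P t /\ F t x).
Proof.
  intros Hl HF.
  apply closed_ext with (fun x => exists t, In t l /\ (fun y => P t /\ F t y) x).
  - apply closed_list_union. intros t _. destruct (classic (P t)) as [Pt|nPt].
    + apply closed_ext with (F t); [auto|]. intro; tauto.
    + apply closed_ext with (fun _ => False); [apply closed_empty|]. intro; tauto.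
  - intro x; split.
    + intros [t [_ H]]; eauto.
    + intros [t H]; exists t; split; [apply Hl|]; tauto.
Qed.

Lemma clopen_ext (F G : X -> Prop) : clopen F -> (forall x, F x <-> G x) -> clopen G.
Proof. intros [Ho Hc] H. split; [apply open_ext with F|apply closed_ext with F]; auto. Qed.

Lemma clopen_empty : clopen (fun _ => False).
Proof. split; [apply open_empty|apply closed_empty]. Qed.

Lemma clopen_full : clopen (fun _ => True).
Proof. split; [apply open_full|apply closed_full]. Qed.

Lemma clopen_and (A B : X -> Prop) : clopen A -> clopen B -> clopen (fun x => A x /\ B x).
Proof. intros [] []; split; [apply open_inter|apply closed_and]; auto. Qed.

Lemma clopen_or (A B : X -> Prop) : clopen A -> clopen B -> clopen (fun x => A x \/ B x).
Proof. intros [] []; split; [apply open_or|apply closed_or]; auto. Qed.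

Lemma clopen_compl (A : X -> Prop) : clopen A -> clopen (fun x => ~ A x).
Proof.
  intros [HO HC]; split; [exact HC|].
  apply open_ext with (1 := HO). intro; split; [tauto|apply NNPP].
Qed.

End OpenClosed.

Section CompactHausdorff.
Context {X : space}.

Definition compact_set (F : X -> Prop) :=
  forall (I : Type) (U : I -> X -> Prop), (forall i, open (U i)) ->
    (forall x, F x -> exists i, U i x) ->
    exists l : list I, forall x, F x -> exists i, In i l /\ U i x.

Lemma compact_closed_set (F : X -> Prop) : compact X -> closed F -> compact_set F.
Proof.
  intros HX HF I U HU Hcov.
  destruct (HX (option I) (fun o => match o with Some i => U i | None => fun x => ~ F x end))
    as [l Hl].
  - intros [i|]; auto.
  - intro x. destruct (classic (F x)) as [Fx|nFx].
    + destruct (Hcov x Fx) as [i Hi]. exists (Some i); auto.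
    + exists None; auto.
  - exists (flat_map (fun o => match o with Some i => [i] | None => [] end) l).
    intros x Fx. destruct (Hl x) as [[i|] [Hi Hx]].
    + exists i; split; auto. apply in_flat_map. exists (Some i); simpl; auto.
    + contradiction.
Qed.

Lemma compact_full : compact X -> compact_set (fun _ => True).
Proof.
  intros HX I U HU Hc. destruct (HX I U HU) as [l Hl].
  - intro x; apply Hc; auto.
  - exists l; intros; auto.
Qed.

Lemma sep_point_compact (F : X -> Prop) (x : X) :
  hausdorff X -> compact_set F -> ~ F x ->
  exists U V, open U /\ open V /\ (forall y, F y -> U y) /\ V x /\
    (forall z, U z -> V z -> False).
Proof.
  intros HH HF nFx.
  pose (T := {p : (X -> Prop) * (X -> Prop) | open (fst p) /\ open (snd p) /\ snd p x /\
               forall z, fst p z -> snd p z -> False}).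
  destruct (HF T (fun t => fst (proj1_sig t))) as [l Hl].
  - intros [p Hp]; simpl; tauto.
  - intros y Fy. assert (y <> x) by (intro; subst; auto).
    destruct (HH y x H) as [U [V [HU [HV [Uy [Vx Hd]]]]]].
    exists (exist _ (U, V) (conj HU (conj HV (conj Vx Hd)))); simpl; auto.
  - exists (fun y => exists t, In t l /\ fst (proj1_sig t) y).
    exists (fun y => forall t, In t l -> snd (proj1_sig t) y).
    split; [|split; [|split; [|split]]].
    + apply open_Union_cond. intros t _; destruct t as [p Hp]; simpl; tauto.
    + apply open_list_inter. intros t _; destruct t as [p Hp]; simpl; tauto.
    + intros y Fy. destruct (Hl y Fy) as [t [Ht Hy]]; eauto.
    + intros t _; destruct t as [p Hp]; simpl; tauto.
    + intros z [t [Ht Hz]] Hv. specialize (Hv t Ht). destruct t as [p Hp]; simpl in *.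
      destruct Hp as (H1 & H2 & H3 & Hd); eauto.
Qed.

Lemma compact_set_closed (F : X -> Prop) : hausdorff X -> compact_set F -> closed F.
Proof.
  intros HH HF. apply open_nbhd. intros x nFx.
  destruct (sep_point_compact F x HH HF nFx) as [U [V [HU [HV [HFU [Vx Hd]]]]]].
  exists V; split; [|split]; auto. intros y Vy Fy; eauto.
Qed.

Lemma sep_compact_compact (A B : X -> Prop) :
  hausdorff X -> compact_set A -> compact_set B -> (forall x, A x -> B x -> False) ->
  exists UA UB, open UA /\ open UB /\ (forall y, A y -> UA y) /\ (forall y, B y -> UB y) /\
    (forall z, UA z -> UB z -> False).
Proof.
  intros HH HA HB Hd.
  pose (T := {p : (X -> Prop) * (X -> Prop) | open (fst p) /\ open (snd p) /\
               (forall y, B y -> snd p y) /\ forall z, fst p z -> snd p z -> False}).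
  destruct (HA T (fun t => fst (proj1_sig t))) as [l Hl].
  - intros [p Hp]; simpl; tauto.
  - intros x Ax. assert (nB : ~ B x) by eauto.
    destruct (sep_point_compact B x HH HB nB) as [U [V [HU [HV [HBU [Vx Hd']]]]]].
    assert (Hd'' : forall z, V z -> U z -> False) by eauto.
    exists (exist _ (V, U) (conj HV (conj HU (conj HBU Hd'')))); simpl; auto.
  - exists (fun y => exists t, In t l /\ fst (proj1_sig t) y).
    exists (fun y => forall t, In t l -> snd (proj1_sig t) y).
    split; [|split; [|split; [|split]]].
    + apply open_Union_cond. intros t _; destruct t as [p Hp]; simpl; tauto.
    + apply open_list_inter. intros t _; destruct t as [p Hp]; simpl; tauto.
    + intros y Ay. destruct (Hl y Ay) as [t [Ht Hy]]; eauto.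
    + intros y By [p Hp] _; simpl. destruct Hp as (H1 & H2 & H & H4); auto.
    + intros z [t [Ht Hz]] Hv. specialize (Hv t Ht). destruct t as [p Hp]; simpl in *.
      destruct Hp as (H1 & H2 & H3 & Hd2); eauto.
Qed.

Lemma closed_point (z : X) : hausdorff X -> closed (fun x => x = z).
Proof.
  intros HH. apply open_nbhd. intros x Hx.
  destruct (HH x z Hx) as [U [V [HU [HV [Ux [Vz Hd]]]]]].
  exists U; split; [|split]; auto. intros y Uy ->; eauto.
Qed.

Lemma open_of_complement_subsingleton (S : X -> Prop) : hausdorff X ->
  (forall z1 z2, ~ S z1 -> ~ S z2 -> z1 = z2) -> open S.
Proof.
  intros HH H. destruct (classic (exists z, ~ S z)) as [[z nz]|nex].
  - apply open_ext with (fun x => ~ (x = z)); [apply closed_point; auto|].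
    intro x; split.
    + intros nxz. apply NNPP. intro nSx. apply nxz. apply H; auto.
    + intros Sx ->; auto.
  - apply open_ext with (fun _ => True); [apply open_full|].
    intro x; split; auto. intros _. apply NNPP. intro n. apply nex; eauto.
Qed.

End CompactHausdorff.

Definition continuous {Y Z : space} (f : Y -> Z) :=
  forall W, open W -> open (fun y => W (f y)).

Definition Im {Y Z : space} (f : Y -> Z) : Z -> Prop := fun z => exists y, f y = z.

Lemma embedding_continuous {Y Z : space} (f : Y -> Z) : embedding f -> continuous f.
Proof. intros [_ [H _]]; exact H. Qed.

Lemma closed_preimage {Y Z : space} (f : Y -> Z) (F : Z -> Prop) :
  continuous f -> closed F -> closed (fun y => F (f y)).
Proof. intros Hf HF. apply (Hf _ HF). Qed.

Lemma clopen_preimage {Y Z : space} (f : Y -> Z) (F : Z -> Prop) :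
  continuous f -> clopen F -> clopen (fun y => F (f y)).
Proof. intros Hf [Ho Hc]. split; [apply Hf; auto|apply closed_preimage; auto]. Qed.

Lemma compact_image {Y Z : space} (f : Y -> Z) (A : Y -> Prop) :
  continuous f -> compact_set A -> compact_set (fun z => exists y, A y /\ f y = z).
Proof.
  intros Hf HA I U HU Hc.
  destruct (HA I (fun i y => U i (f y))) as [l Hl].
  - intro i; apply Hf; auto.
  - intros y Ay. apply Hc; eauto.
  - exists l. intros z [y [Ay <-]]. auto.
Qed.

Section Subspace.
Context {X : space}.

Lemma open_subspace_trace (S O : X -> Prop) :
  open O -> @open (subspace S) (fun s => O (proj1_sig s)).
Proof. intros H. exists O; split; auto. tauto. Qed.

Lemma clopen_subspace_trace (S C : X -> Prop) :
  clopen C -> clopen (fun s : subspace S => C (proj1_sig s)).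
Proof. intros [Ho Hc]. split; [|apply (open_subspace_trace S _ Hc)]. apply open_subspace_trace; auto. Qed.

Definition lift_open (S : X -> Prop) (V : subspace S -> Prop) : X -> Prop :=
  fun x => exists O, open O /\ (forall s, V s <-> O (proj1_sig s)) /\ O x.

Lemma lift_open_open S V : open (lift_open S V).
Proof.
  apply open_ext with
    (fun x => exists O, (open O /\ forall s, V s <-> O (proj1_sig s)) /\ O x).
  - apply open_union; tauto.
  - intro x; split; intros [O H]; exists O; tauto.
Qed.

Lemma lift_openE S (V : subspace S -> Prop) :
  open V -> forall s, V s <-> lift_open S V (proj1_sig s).
Proof.
  intros [O [HO HV]] s. split.
  - intros Vs. exists O; split; [|split]; auto. apply HV; auto.
  - intros [O' [_ [H' Hs]]]. apply H'; auto.
Qed.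

Lemma compact_subspace (F : X -> Prop) : compact X -> closed F -> compact (subspace F).
Proof.
  intros HX HF I U HU Hc.
  destruct (compact_closed_set F HX HF I (fun i => lift_open F (U i))) as [l Hl].
  - intro; apply lift_open_open.
  - intros x Fx. destruct (Hc (exist _ x Fx)) as [i Hi]. exists i.
    apply (lift_openE F (U i) (HU i) (exist _ x Fx)); auto.
  - exists l. intros [x Fx]. destruct (Hl x Fx) as [i [Hi Hx]]. exists i; split; auto.
    apply (lift_openE F (U i) (HU i) (exist _ x Fx)); auto.
Qed.

Lemma hausdorff_subspace (S : X -> Prop) : hausdorff X -> hausdorff (subspace S).
Proof.
  intros HH [x hx] [y hy] Hne.
  assert (x <> y) by (intro; subst; apply Hne; apply sig_eq; auto).
  destruct (HH x y H) as [U [V [HU [HV [Ux [Vy Hd]]]]]].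
  exists (fun s => U (proj1_sig s)), (fun s => V (proj1_sig s)).
  split; [apply open_subspace_trace; auto|split; [apply open_subspace_trace; auto|]].
  simpl; split; [|split]; auto. intros z; eauto.
Qed.

Lemma embedding_subspace_incl (S T : X -> Prop) (g : subspace S -> subspace T) :
  (forall s, proj1_sig (g s) = proj1_sig s) -> embedding g.
Proof.
  intros Hg. split; [|split].
  - intros s1 s2 E. apply sig_eq. rewrite <- (Hg s1), <- (Hg s2), E; auto.
  - intros W [O [HO HWO]].
    apply open_ext with (fun s => O (proj1_sig s)); [apply open_subspace_trace; auto|].
    intro s. rewrite HWO, Hg. tauto.
  - intros V [O [HO HVO]].
    exists (fun t => O (proj1_sig t)); split; [apply open_subspace_trace; auto|].
    intro s. rewrite HVO, Hg. tauto.
Qed.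

Lemma embedding_proj1_sig (S : X -> Prop) : embedding (fun s : subspace S => proj1_sig s).
Proof.
  split; [|split].
  - intros s1 s2 E. apply sig_eq; auto.
  - intros W HW. apply open_subspace_trace; auto.
  - intros V HV. exact HV.
Qed.

Lemma embedding_into_subspace (T : X -> Prop) (g : X -> subspace T) :
  (forall x, proj1_sig (g x) = x) -> embedding g.
Proof.
  intros Hg. split; [|split].
  - intros x1 x2 E. rewrite <- (Hg x1), <- (Hg x2), E; auto.
  - intros W [O [HO HWO]]. apply open_ext with O; auto. intro x. rewrite HWO, Hg. tauto.
  - intros V HV. exists (fun t => V (proj1_sig t)); split; [apply open_subspace_trace; auto|].
    intro x; rewrite Hg; tauto.
Qed.

End Subspace.

Section SumEmbedding.
Context {I : Type} {K : I -> space} {Z : space} (e : sum_space K -> Z).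

Lemma continuous_piece i : embedding e -> continuous (fun k : K i => e (existT _ i k)).
Proof. intros [_ [Hc _]] W HW. apply (Hc W HW i). Qed.

Lemma open_piece_image : embedding e -> open (Im e) ->
  forall i (U : K i -> Prop), open U -> open (fun z => exists k, U k /\ e (existT _ i k) = z).
Proof.
  intros [Hinj [Hc Ho]] HIm i U HU.
  destruct (Ho (fun s => exists k, U k /\ s = existT _ i k)) as [W [HW HWs]].
  - intro i'. destruct (classic (i' = i)) as [->|ne].
    + apply open_ext with U; auto. intro x; split.
      * intros Ux; eauto.
      * intros [k [Uk E]]. apply inj_pair2 in E. subst; auto.
    + apply open_ext with (fun _ => False); [apply open_empty|]. intro x; split; [tauto|].
      intros [k [_ E]]. apply ne. apply (f_equal (@projT1 _ _) E).
  - apply open_ext with (fun z => W z /\ Im e z); [apply open_inter; auto|].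
    intro z; split.
    + intros [Wz [s <-]]. apply HWs in Wz. destruct Wz as [k [Uk ->]]; eauto.
    + intros [k [Uk <-]]. split; [|eexists; eauto]. apply HWs; eauto.
Qed.

Lemma clopen_piece_image i : compact Z -> hausdorff Z -> embedding e -> open (Im e) ->
  compact (K i) -> clopen (fun z => exists k : K i, e (existT _ i k) = z).
Proof.
  intros HZc HZh He HIm HKi. split.
  - apply open_ext with (fun z => exists k : K i, True /\ e (existT _ i k) = z).
    + apply (open_piece_image He HIm i (fun _ => True)), open_full.
    + intro z; split; intros [k Hk]; exists k; tauto.
  - apply closed_ext with (fun z => exists k : K i, True /\ e (existT _ i k) = z).
    + apply compact_set_closed; auto.
      apply compact_image; [apply continuous_piece; auto|apply compact_full; auto].
    + intro z; split; intros [k Hk]; exists k; tauto.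
Qed.

Lemma aleksandrov_image_open : aleksandrov_compactification e -> open (Im e).
Proof.
  intros [_ [Hh [_ [_ Hcomp]]]]. apply open_of_complement_subsingleton; auto.
  intros z1 z2 n1 n2. apply Hcomp.
  - intros y E; apply n1; exists y; auto.
  - intros y E; apply n2; exists y; auto.
Qed.

End SumEmbedding.

Section ZeroDimensional.
Context {X : space} (HX : compact X) (HH : hausdorff X) (HS : scattered X).

Definition quasi_comp (x y : X) := forall C, clopen C -> C x -> C y.

Lemma quasi_comp_closed x : closed (quasi_comp x).
Proof.
  apply closed_ext with
    (fun y => forall t : {C : X -> Prop | clopen C /\ C x}, proj1_sig t y).
  - apply closed_Inter. intros [C HC']; simpl; apply (proj2 (proj1 HC')).
  - intro y; split.
    + intros H C HC Cx. apply (H (exist _ C (conj HC Cx))).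
    + intros H [C [HC Cx]]; simpl; apply H; auto.
Qed.

Lemma clopen_within_quasi_comp_nbhd x (U : X -> Prop) :
  open U -> (forall y, quasi_comp x y -> U y) ->
  exists C : X -> Prop, clopen C /\ C x /\ forall y, C y -> U y.
Proof.
  intros HU HQ.
  assert (HF : compact_set (fun y => ~ U y))
    by (apply compact_closed_set; auto; apply closed_compl; auto).
  destruct (HF {C : X -> Prop | clopen C /\ C x} (fun t y => ~ proj1_sig t y)) as [l Hl].
  - intros [C HC']; simpl; apply (proj2 (proj1 HC')).
  - intros y nUy. assert (~ quasi_comp x y) by (intro; eauto).
    apply not_all_ex_not in H. destruct H as [C HC].
    apply imply_to_and in HC. destruct HC as [HC HC2]. apply imply_to_and in HC2.
    destruct HC2 as [Cx nCy]. exists (exist _ C (conj HC Cx)); simpl; auto.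
  - exists (fun y => forall t, In t l -> proj1_sig t y). split; [split|split].
    + apply open_list_inter. intros [C HC'] _; simpl; apply (proj1 (proj1 HC')).
    + apply closed_ext with (fun y => forall t : {t | In t l}, proj1_sig (proj1_sig t) y).
      * apply closed_Inter. intros [[C HC'] Ht]; simpl; apply (proj2 (proj1 HC')).
      * intro y; split.
        -- intros H t Ht. apply (H (exist _ t Ht)).
        -- intros H [t Ht]; simpl; auto.
    + intros [C HC'] _; simpl; apply (proj2 HC').
    + intros y Hy. apply NNPP; intro nUy. destruct (Hl y nUy) as [t [Ht Hn]]. auto.
Qed.

Lemma quasi_comp_connected x (A B : X -> Prop) :
  closed A -> closed B -> (forall y, A y -> B y -> False) ->
  (forall y, quasi_comp x y -> A y \/ B y) -> A x ->
  forall y, quasi_comp x y -> B y -> False.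
Proof.
  intros HA HB Hd Hc Ax.
  destruct (sep_compact_compact A B HH (compact_closed_set A HX HA)
              (compact_closed_set B HX HB) Hd)
    as [UA [UB [HUA [HUB [HAU [HBU Hd2]]]]]].
  destruct (clopen_within_quasi_comp_nbhd x (fun y => UA y \/ UB y))
    as [C [[HCo HCc] [Cx HCU]]].
  - apply open_or; auto.
  - intros y Hy. destruct (Hc y Hy); auto.
  - assert (HD : clopen (fun y => C y /\ UA y)).
    { split; [apply open_inter; auto|].
      apply closed_ext with (fun y => C y /\ ~ UB y); [apply closed_diff; auto|].
      intro y; split.
      - intros [Cy nUB]. split; auto. destruct (HCU y Cy); tauto.
      - intros [Cy UAy]. split; eauto. }
    intros y Qy By. destruct (Qy _ HD (conj Cx (HAU x Ax))) as [_ UAy]. eauto.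
Qed.

(* An isolated point q of the quasi-component of x splits it into the closed
   pieces {q} and the rest, so connectedness forces it to be {x}. *)
Lemma quasi_comp_single x y : quasi_comp x y -> y = x.
Proof.
  intros Qy.
  destruct (HS (quasi_comp x) (ex_intro _ x (fun C _ Cx => Cx)))
    as [q [Qq [O [HO [Oq Hiso]]]]].
  assert (HR : closed (fun z => quasi_comp x z /\ ~ O z))
    by (apply closed_and; [apply quasi_comp_closed|apply closed_compl; auto]).
  destruct (classic (q = x)) as [->|nqx].
  - apply NNPP. intro nyx.
    apply (quasi_comp_connected x (fun z => z = x) (fun z => quasi_comp x z /\ ~ O z))
      with (y := y); auto.
    + apply closed_point; auto.
    + intros z -> [_ nO]; auto.
    + intros z Qz. destruct (classic (O z)); [left; auto|right; auto].
  - exfalso.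
    apply (quasi_comp_connected x (fun z => quasi_comp x z /\ ~ O z) (fun z => z = q))
      with (y := q); auto.
    + apply closed_point; auto.
    + intros z [_ nO] ->; auto.
    + intros z Qz. destruct (classic (O z)); [right; auto|left; auto].
    + split; [intros C _ Cx; auto|]. intro Ox. apply nqx. symmetry.
      apply Hiso; auto. intros C _ Cx; auto.
Qed.

Lemma clopen_nbhd_basis x (U : X -> Prop) : open U -> U x ->
  exists C : X -> Prop, clopen C /\ C x /\ forall y, C y -> U y.
Proof.
  intros HU Ux. apply clopen_within_quasi_comp_nbhd; auto.
  intros y Qy. rewrite (quasi_comp_single x y Qy); auto.
Qed.

Lemma clopen_separation x p : x <> p -> exists C : X -> Prop, clopen C /\ C x /\ ~ C p.
Proof.
  intros Hne. destruct (HH x p Hne) as [U [V [HU [HV [Ux [Vp Hd]]]]]].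
  destruct (clopen_nbhd_basis x U HU Ux) as [C [HC [Cx HCU]]].
  exists C; split; [|split]; auto. intro Cp. eauto.
Qed.

End ZeroDimensional.

Lemma classA_compact_hausdorff (Z : space) : classA Z -> compact Z /\ hausdorff Z.
Proof.
  destruct 1 as [Z HZ|Z [x Hx]|I K Z e HK [Hc [Hh _]]].
  - split.
    + intros I U _ _. exists nil. intro x; destruct (HZ x).
    + intro x; destruct (HZ x).
  - split.
    + intros I U _ Hc. destruct (Hc x) as [i Hi]. exists [i]. intro y.
      rewrite (Hx y). exists i; simpl; auto.
    + intros y z Hne. exfalso. apply Hne. rewrite (Hx y), (Hx z); auto.
  - auto.
Qed.

Section OpenPieces.
Context (Z : space) (HZc : compact Z) (HZh : hausdorff Z)
  (I : Type) (K : I -> space) (HK : forall i, classA (K i))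
  (f : forall i, K i -> Z) (Hf : forall i, embedding (f i))
  (Himg : forall i, open (fun z => exists k, f i k = z))
  (Hdisj : forall i j (k : K i) (k' : K j), f i k = f j k' ->
     existT (fun i => pt (K i)) i k = existT (fun i => pt (K i)) j k').

Definition glue (s : sum_space K) : Z := f (projT1 s) (projT2 s).

Lemma glue_embedding : embedding glue.
Proof.
  split; [|split].
  - intros [i k] [j k'] E. apply Hdisj; auto.
  - intros W HW i. apply (embedding_continuous (f i) (Hf i)); auto.
  - intros V HV.
    exists (fun z => exists t : {p : I * (Z -> Prop) | open (snd p) /\
                 forall k, V (existT _ (fst p) k) <-> snd p (f (fst p) k)},
               snd (proj1_sig t) z /\ exists k, f (fst (proj1_sig t)) k = z).
    split.
    + apply open_Union. intros [[i O] HO']; simpl.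
      apply open_inter; [apply (proj1 HO')|apply Himg].
    + intros [i k]. unfold glue; simpl. split.
      * intros Vik.
        destruct (proj2 (proj2 (Hf i)) (fun k => V (existT _ i k)) (HV i)) as [O [HO HVO]].
        exists (exist _ (i, O) (conj HO HVO)); simpl. split; [apply HVO; auto|eauto].
      * intros [[[j O] [HO HVO]] [Oz [k' Ek]]]; simpl in *.
        rewrite <- (Hdisj _ _ _ _ Ek). apply HVO. rewrite Ek; auto.
Qed.

Lemma classA_of_dense_open_pieces :
  (forall z1 z2, (forall i k, f i k <> z1) -> (forall i k, f i k <> z2) -> z1 = z2) ->
  (forall W : Z -> Prop, open W -> (exists z, W z) -> exists i k, W (f i k)) ->
  classA Z.
Proof.
  intros Hcomp Hdense. apply (@A_compactify I K Z glue); auto.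
  split; [auto|split; [auto|split; [apply glue_embedding|split]]].
  - intros W HW Hne. destruct (Hdense W HW Hne) as [i [k Hk]]. exists (existT _ i k); auto.
  - intros z1 z2 H1 H2. apply Hcomp.
    + intros i k E. apply (H1 (existT _ i k)); auto.
    + intros i k E. apply (H2 (existT _ i k)); auto.
Qed.

End OpenPieces.

Definition with_point {I : Type} (K : I -> space) {Z : space} (z0 : Z) (o : option I) : space :=
  match o with Some i => K i | None => subspace (fun z : Z => z = z0) end.

Definition with_point_map {I : Type} {K : I -> space} {Z : space} (z0 : Z)
  (f : forall i, K i -> Z) (o : option I) : with_point K z0 o -> Z :=
  match o return with_point K z0 o -> Z with
  | Some i => f i
  | None => fun s => proj1_sig s
  end.

Section OpenPiecesComplement.
Context (Z : space) (HZc : compact Z) (HZh : hausdorff Z)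
  (I : Type) (K : I -> space) (HK : forall i, classA (K i))
  (f : forall i, K i -> Z) (Hf : forall i, embedding (f i))
  (Himg : forall i, open (fun z => exists k, f i k = z))
  (Hdisj : forall i j (k : K i) (k' : K j), f i k = f j k' ->
      existT (fun i => pt (K i)) i k = existT (fun i => pt (K i)) j k')
  (Hcomp : forall z1 z2, (forall i k, f i k <> z1) -> (forall i k, f i k <> z2) -> z1 = z2).

(* An isolated point outside the pieces becomes one more, one-point, piece. *)
Lemma classA_of_open_pieces_isolated (z0 : Z) :
  (forall i k, f i k <> z0) -> open (fun z => z = z0) -> classA Z.
Proof.
  intros Hz0 Ho0. pose (s0 := exist (fun z : Z => z = z0) z0 eq_refl).
  refine (classA_of_dense_open_pieces Z HZc HZh (option I) (with_point K z0) _
            (with_point_map z0 f) _ _ _ _ _).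
  - intros [i|]; simpl; auto. apply A_point. exists s0.
    intros [y Hy]. apply sig_eq; auto.
  - intros [i|]; simpl; auto. apply embedding_proj1_sig.
  - intros [i|]; simpl; auto. apply open_ext with (fun z => z = z0); auto.
    intro z; split.
    + intros ->. exists s0; auto.
    + intros [[y Hy] <-]; auto.
  - intros [i|] [j|] k k' E; simpl in *.
    + pose proof (Hdisj i j k k' E) as E2.
      apply (f_equal (fun s : {i : I & K i} =>
               existT (fun o => pt (with_point K z0 o)) (Some (projT1 s)) (projT2 s)) E2).
    + exfalso. destruct k' as [y Hy]; simpl in *. subst. apply (Hz0 i k); auto.
    + exfalso. destruct k as [y Hy]; simpl in *. subst. apply (Hz0 j k'); auto.
    + assert (k = k') by (apply sig_eq; auto). subst; auto.
  - intros z1 z2 H1 H2. exfalso.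
    destruct (classic (z1 = z0)) as [->|ne].
    + apply (H1 None s0); auto.
    + apply ne. apply Hcomp; auto. intros i k; apply (H1 (Some i) k).
  - intros W HW [z Wz]. destruct (classic (z = z0)) as [->|ne].
    + exists None, s0; auto.
    + destruct (classic (exists i k, f i k = z)) as [[i [k <-]]|nz].
      * exists (Some i), k; auto.
      * exfalso. apply ne. apply Hcomp; auto. intros i k E; apply nz; eauto.
Qed.

Lemma classA_of_open_pieces : classA Z.
Proof.
  destruct (classic (exists z0, (forall i k, f i k <> z0) /\ open (fun z => z = z0)))
    as [[z0 [Hz0 Ho0]]|nex].
  - apply (classA_of_open_pieces_isolated z0); auto.
  - apply (classA_of_dense_open_pieces Z HZc HZh I K HK f); auto.
    intros W HW [z Wz]. apply NNPP; intro nW.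
    destruct (classic (exists i k, f i k = z)) as [[i [k <-]]|nz].
    + apply nW; eauto.
    + apply nex. exists z; split.
      * intros i k E; apply nz; eauto.
      * apply open_ext with W; auto. intro y; split.
        -- intros Wy. apply Hcomp.
           ++ intros i k E. apply nW. exists i, k. rewrite E; auto.
           ++ intros i k E; apply nz; eauto.
        -- intros ->; auto.
Qed.

End OpenPiecesComplement.

Section ClopenEmbedding.
Context {I : Type} {K : I -> space} {Z : space} (e : sum_space K -> Z)
  (Hal : aleksandrov_compactification e) (HKc : forall i, compact (K i))
  {Y : space} (HYc : compact Y) (HYh : hausdorff Y)
  (g : Y -> Z) (Hg : embedding g) (Hgcl : clopen (Im g)).

Definition piece_preimage i (y : Y) := exists k : K i, g y = e (existT _ i k).

Definition piece_restrict i (s : subspace (piece_preimage i)) : K i :=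
  proj1_sig (constructive_indefinite_description _ (proj2_sig s)).

Lemma piece_restrictE i s : g (proj1_sig s) = e (existT _ i (piece_restrict i s)).
Proof. unfold piece_restrict. destruct (constructive_indefinite_description _ _); auto. Qed.

Lemma piece_inj i (k1 k2 : K i) : e (existT _ i k1) = e (existT _ i k2) -> k1 = k2.
Proof. intros E. apply (proj1 (proj1 (proj2 (proj2 Hal)))), inj_pair2 in E; auto. Qed.

Lemma clopen_piece_preimage i : clopen (piece_preimage i).
Proof.
  destruct Hal as [Hc [Hh [He _]]].
  apply clopen_ext with (fun y => exists k : K i, e (existT _ i k) = g y).
  - apply (clopen_preimage g (fun z => exists k : K i, e (existT _ i k) = z)).
    + apply embedding_continuous; auto.
    + apply clopen_piece_image; auto. apply aleksandrov_image_open; auto.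
  - intro y; split; intros [k Hk]; exists k; auto.
Qed.

Lemma piece_restrict_embedding i : embedding (piece_restrict i).
Proof.
  pose proof (aleksandrov_image_open e Hal) as HIm.
  destruct Hal as [_ [_ [He _]]]. destruct Hg as [ginj [gcont gopen]].
  split; [|split].
  - intros s1 s2 E. apply sig_eq, ginj. rewrite !piece_restrictE, E; auto.
  - intros W HW.
    apply open_ext with (fun s : subspace (piece_preimage i) =>
        (fun y => exists k, W k /\ e (existT _ i k) = g y) (proj1_sig s)).
    + exact (open_subspace_trace (piece_preimage i) _
               (gcont _ (open_piece_image e He HIm i W HW))).
    + intro s; simpl. split.
      * intros [k [Wk Ek]]. rewrite piece_restrictE in Ek. apply piece_inj in Ek.
        subst; auto.
      * intros Ws. exists (piece_restrict i s); split; auto. symmetry; apply piece_restrictE.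
  - intros V [U [HU HVU]].
    destruct (gopen U HU) as [U2 [HU2 HUU2]].
    exists (fun k => U2 (e (existT _ i k))). split.
    + apply continuous_piece; auto.
    + intro s. rewrite HVU, HUU2, piece_restrictE. tauto.
Qed.

Lemma clopen_Im_piece_restrict i : clopen (Im (piece_restrict i)).
Proof.
  pose proof (proj1 (proj2 (proj2 Hal))) as He.
  apply clopen_ext with (fun k => Im g (e (existT _ i k))).
  - apply clopen_preimage; [apply continuous_piece; auto|auto].
  - intro k; split.
    + intros [y Ey]. exists (exist (piece_preimage i) y (ex_intro _ k Ey)).
      apply piece_inj. rewrite <- piece_restrictE. auto.
    + intros [s <-]. exists (proj1_sig s). apply piece_restrictE.
Qed.

Lemma classA_of_classA_piece_preimages :
  (forall i, classA (subspace (piece_preimage i))) -> classA Y.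
Proof.
  intros HA. destruct Hal as [_ [_ [He [_ Hcomp]]]].
  apply (classA_of_open_pieces Y HYc HYh I (fun i => subspace (piece_preimage i)) HA
           (fun i s => proj1_sig s)).
  - intro i; apply embedding_proj1_sig.
  - intro i. apply open_ext with (piece_preimage i); [apply clopen_piece_preimage|].
    intro y; split.
    + intros Hy. exists (exist (piece_preimage i) y Hy); auto.
    + intros [s <-]. exact (proj2_sig s).
  - intros i j [y [k Hk]] [y' [k' Hk']] E; simpl in E; subst y'.
    assert (E2 := proj1 He _ _ (eq_trans (eq_sym Hk) Hk')).
    assert (i = j) by apply (f_equal (@projT1 _ _) E2). subst j.
    f_equal. apply sig_eq; auto.
  - intros y1 y2 H1 H2. apply (proj1 Hg). apply Hcomp.
    + intros [i k] E. apply (H1 i (exist (piece_preimage i) y1 (ex_intro _ k (eq_sym E)))); auto.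
    + intros [i k] E. apply (H2 i (exist (piece_preimage i) y2 (ex_intro _ k (eq_sym E)))); auto.
Qed.

End ClopenEmbedding.

Lemma classA_clopen_embedding (Z : space) : classA Z ->
  forall (Y : space) (g : Y -> Z), compact Y -> hausdorff Y -> embedding g ->
  clopen (Im g) -> classA Y.
Proof.
  induction 1 as [Z HZ|Z [x Hx]|I K Z e HK IH Hal]; intros Y g HYc HYh Hg Hcl.
  - apply A_empty. intro y; apply (HZ (g y)).
  - destruct (classic (exists y : Y, True)) as [[y _]|ny].
    + apply A_point. exists y. intro y'. apply (proj1 Hg). rewrite (Hx (g y')), (Hx (g y)); auto.
    + apply A_empty. intro y; apply ny; eauto.
  - assert (HKc : forall i, compact (K i)) by (intro i; apply classA_compact_hausdorff, HK).
    apply (classA_of_classA_piece_preimages e Hal HKc HYc HYh g Hg).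
    intro i. apply (IH i _ (piece_restrict e g i)).
    + apply compact_subspace; auto. apply (clopen_piece_preimage e Hal HKc g Hg).
    + apply hausdorff_subspace; auto.
    + apply piece_restrict_embedding; auto.
    + apply clopen_Im_piece_restrict; auto.
Qed.

Definition lf_refinement_in {Z : space} (S : Z -> Prop) {I J : Type}
  (U : I -> Z -> Prop) (V : J -> Z -> Prop) : Prop :=
  (forall j, open (V j)) /\ (forall x, S x -> exists j, V j x) /\
  (forall j, exists i, forall x, S x -> V j x -> U i x) /\
  (forall x, S x -> exists W, open W /\ W x /\ exists l : list J,
      forall j, (exists y, S y /\ W y /\ V j y) -> In j l).

(* Paracompactness of the subspace [S], phrased with open sets of the ambient space. *)
Definition paracompact_in {Z : space} (S : Z -> Prop) : Prop :=
  forall (I : Type) (U : I -> Z -> Prop), (forall i, open (U i)) ->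
    (forall x, S x -> exists i, U i x) ->
    exists (J : Type) (V : J -> Z -> Prop), lf_refinement_in S U V.

Lemma paracompact_subspaceP {Z : space} (S : Z -> Prop) :
  paracompact (subspace S) <-> paracompact_in S.
Proof.
  split.
  - intros Hp I U HU Hc.
    destruct (Hp I (fun i s => U i (proj1_sig s))) as [J [V [Vo [Vc [Vr Vl]]]]].
    + intro i. apply open_subspace_trace; auto.
    + intros [x Sx]. apply (Hc x Sx).
    + exists J, (fun j => lift_open S (V j)). split; [|split; [|split]].
      * intro j; apply lift_open_open.
      * intros x Sx. destruct (Vc (exist _ x Sx)) as [j Hj]. exists j.
        apply (lift_openE S (V j) (Vo j) (exist _ x Sx)); auto.
      * intro j. destruct (Vr j) as [i Hi]. exists i. intros x Sx Hx.
        apply (Hi (exist _ x Sx)). apply (lift_openE S (V j) (Vo j) (exist _ x Sx)); auto.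
      * intros x Sx. destruct (Vl (exist _ x Sx)) as [W [HW [Wx [l Hl]]]].
        exists (lift_open S W). split; [apply lift_open_open|split].
        -- apply (lift_openE S W HW (exist _ x Sx)); auto.
        -- exists l. intros j [y [Sy [Wy Vy]]]. apply Hl. exists (exist _ y Sy). split.
           ++ apply (lift_openE S W HW (exist _ y Sy)); auto.
           ++ apply (lift_openE S (V j) (Vo j) (exist _ y Sy)); auto.
  - intros Hp I U HU Hc.
    destruct (Hp I (fun i => lift_open S (U i))) as [J [V [Vo [Vc [Vr Vl]]]]].
    + intro i; apply lift_open_open.
    + intros x Sx. destruct (Hc (exist _ x Sx)) as [i Hi]. exists i.
      apply (lift_openE S (U i) (HU i) (exist _ x Sx)); auto.
    + exists J, (fun j s => V j (proj1_sig s)). split; [|split; [|split]].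
      * intro j; apply open_subspace_trace; auto.
      * intros [x Sx]. apply (Vc x Sx).
      * intro j. destruct (Vr j) as [i Hi]. exists i. intros [x Sx] Hx.
        apply (lift_openE S (U i) (HU i) (exist _ x Sx)); auto.
      * intros [x Sx]. destruct (Vl x Sx) as [W [HW [Wx [l Hl]]]].
        exists (fun s => W (proj1_sig s)). split; [apply open_subspace_trace; auto|split; auto].
        exists l. intros j [[y Sy] [Wy Vy]]. apply Hl. exists y; auto.
Qed.

Lemma paracompact_in_empty {Z : space} (S : Z -> Prop) : (forall x, ~ S x) -> paracompact_in S.
Proof.
  intros HS I U HU _. exists I, U. split; [auto|split; [|split]].
  - intros x Sx; destruct (HS x Sx).
  - intro j; exists j; auto.
  - intros x Sx; destruct (HS x Sx).
Qed.

Lemma classA_scattered (Z : space) : classA Z -> scattered Z.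
Proof.
  induction 1 as [Z HZ|Z [x Hx]|I K Z e HK IH Hal]; intros S [z Sz].
  - destruct (HZ z).
  - exists z. split; auto. exists (fun _ => True).
    split; [apply open_full|split; auto]. intros y _ _. rewrite (Hx y), (Hx z); auto.
  - pose proof (aleksandrov_image_open e Hal) as HIm.
    destruct Hal as [Hc [Hh [He [_ Hcomp]]]].
    destruct (classic (exists i k, S (e (existT _ i k)))) as [[i [k Sk]]|nS].
    + destruct (IH i (fun k => S (e (existT _ i k))) (ex_intro _ k Sk))
        as [k0 [Sk0 [U [HU [Uk0 Hiso]]]]].
      exists (e (existT _ i k0)). split; auto.
      exists (fun z => exists k, U k /\ e (existT _ i k) = z). split; [|split].
      * apply (open_piece_image e He HIm i U HU).
      * eauto.
      * intros y [k1 [Uk1 <-]] Sy. rewrite (Hiso k1 Uk1 Sy); auto.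
    + exists z. split; auto. exists (fun _ => True). split; [apply open_full|split; auto].
      intros y _ Sy. apply Hcomp; intros [i k] E; apply nS; exists i, k; congruence.
Qed.

Section Assemble.
Context {I : Type} {K : I -> space} {Z : space} (e : sum_space K -> Z) (He : embedding e)
  (HIm : open (Im e)) (S : Z -> Prop) (I0 : Type) (U : I0 -> Z -> Prop).
Let ei i (k : K i) := e (existT (fun i => pt (K i)) i k).
Context (Jf : I -> Type) (Vf : forall i, Jf i -> K i -> Prop)
  (HVf : forall i, lf_refinement_in (fun k => S (ei i k)) (fun u k => U u (ei i k)) (Vf i)).
Context (O0 : Z -> Prop) (u0 : I0) (Q : I -> Prop) (HO0 : open O0)
  (HSQ : forall z, S z -> O0 z \/ exists i k, Q i /\ ei i k = z)
  (HO0U : forall z, O0 z -> U u0 z)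
  (HQfar : forall z, S z -> ~ Im e z -> exists W, open W /\ W z /\
          forall y, W y -> forall i k, Q i -> ei i k = y -> False).

(* The pieces' refinements, pushed forward by [e] and restricted to pieces in [Q],
   together with [O0]. *)
Lemma lf_refinement_assemble :
  exists (J : Type) (V : J -> Z -> Prop), lf_refinement_in S U V.
Proof.
  exists (option {i : I & Jf i}).
  exists (fun o z => match o with
                     | None => O0 z
                     | Some p => Q (projT1 p) /\
                         exists k, Vf (projT1 p) (projT2 p) k /\ ei (projT1 p) k = z
                     end).
  split; [|split; [|split]].
  - intros [[i j]|]; simpl; auto. apply open_cond. intros _.
    apply (open_piece_image e He HIm i (Vf i j) (proj1 (HVf i) j)).
  - intros z Sz. destruct (HSQ z Sz) as [Oz|[i [k [Qi <-]]]].
    + exists None; auto.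
    + destruct (proj1 (proj2 (HVf i)) k Sz) as [j Hj].
      exists (Some (existT _ i j)); simpl. split; eauto.
  - intros [[i j]|]; simpl.
    + destruct (proj1 (proj2 (proj2 (HVf i))) j) as [u Hu]. exists u.
      intros z Sz [Qi [k [Vk <-]]]. apply Hu; auto.
    + exists u0. intros z _ Oz; auto.
  - intros z Sz. destruct (classic (Im e z)) as [[[i k] <-]|nIm].
    + destruct (proj2 (proj2 (proj2 (HVf i))) k Sz) as [W [HW [Wk [l Hl]]]].
      exists (fun z => exists k, W k /\ ei i k = z). split; [|split].
      * apply (open_piece_image e He HIm i W HW).
      * exists k; split; auto.
      * exists (None :: map (fun j => Some (existT _ i j)) l).
        intros [[i' j]|] [y [Sy [[k1 [Wk1 Ey]] Vy]]]; simpl in *; [right|left; auto].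
        destruct Vy as [Qi [k2 [Vk2 Ey2]]]. rewrite <- Ey in Ey2.
        pose proof (proj1 He _ _ Ey2) as E2.
        assert (i' = i) by apply (f_equal (@projT1 _ _) E2). subst i'.
        apply inj_pair2 in E2. subst k2.
        apply (in_map (fun j0 : Jf i => Some (existT Jf i j0)) l j), Hl.
        exists k1. split; [|split]; auto. rewrite Ey; auto.
    + destruct (HQfar z Sz nIm) as [W [HW [Wz HW2]]].
      exists W. split; [auto|split; [auto|]]. exists [None].
      intros [[i j]|] [y [Sy [Wy Vy]]]; simpl in *; auto.
      destruct Vy as [Qi [k [_ Ek]]]. exfalso; apply (HW2 y Wy i k Qi Ek).
Qed.

End Assemble.

Section CompactificationParacompact.
Context {I : Type} {K : I -> space} {Z : space} (e : sum_space K -> Z)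
  (Hal : aleksandrov_compactification e) (HKc : forall i, compact (K i))
  (IH : forall i (S : K i -> Prop), paracompact_in S).

Lemma piece_lf_refinements (S : Z -> Prop) (I0 : Type) (U : I0 -> Z -> Prop) :
  (forall u, open (U u)) -> (forall x, S x -> exists u, U u x) ->
  exists (Jf : I -> Type) (Vf : forall i, Jf i -> K i -> Prop), forall i : I,
    lf_refinement_in (fun k => S (e (existT _ i k))) (fun u k => U u (e (existT _ i k))) (Vf i).
Proof.
  intros HU Hcov.
  assert (Hp : forall i, exists p : {J : Type & J -> K i -> Prop},
             lf_refinement_in (fun k => S (e (existT _ i k)))
               (fun u k => U u (e (existT _ i k))) (projT2 p)).
  { intro i.
    destruct (IH i (fun k => S (e (existT _ i k))) I0 (fun u k => U u (e (existT _ i k))))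
      as [J [V HV]].
    - intro u. apply (continuous_piece e i (proj1 (proj2 (proj2 Hal)))), HU.
    - intros k Sk; apply Hcov; auto.
    - exists (existT _ J V); auto. }
  pose (ref := fun i => proj1_sig (constructive_indefinite_description _ (Hp i))).
  exists (fun i => projT1 (ref i)), (fun i => projT2 (ref i)).
  intro i. exact (proj2_sig (constructive_indefinite_description _ (Hp i))).
Qed.

Lemma paracompact_in_compactification (S : Z -> Prop) : paracompact_in S.
Proof.
  pose proof (aleksandrov_image_open e Hal) as HIm.
  destruct Hal as [Hc [Hh [He [_ Hcomp]]]].
  assert (Hcompl : forall z1 z2, ~ Im e z1 -> ~ Im e z2 -> z1 = z2).
  { intros z1 z2 n1 n2. apply Hcomp; intros y E; [apply n1|apply n2]; exists y; auto. }
  intros I0 U HU Hcov.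
  destruct (classic (exists x, S x)) as [[x1 Sx1]|nS].
  2:{ apply paracompact_in_empty; auto; intros x Sx; apply nS; eauto. }
  destruct (Hcov x1 Sx1) as [u1 _].
  destruct (piece_lf_refinements S I0 U HU Hcov) as [Jf [Vf Href]].
  destruct (classic (exists zi, S zi /\ ~ Im e zi)) as [[zi [Szi nzi]]|nA].
  - (* by compactness, finitely many pieces cover what the member of the cover at the
       point at infinity misses *)
    destruct (Hcov zi Szi) as [ui Hui].
    destruct (compact_closed_set (fun z => ~ U ui z) Hc (closed_compl _ (HU ui)) I
                (fun i z => exists k : K i, e (existT _ i k) = z)) as [l Hl].
    { intro i. apply clopen_piece_image; auto. }
    { intros z nU. destruct (classic (Im e z)) as [[[i k] <-]|nI].
      - exists i, k; auto.
      - exfalso. apply nU. rewrite (Hcompl z zi nI nzi). auto. }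
    apply (lf_refinement_assemble e He HIm S I0 U _ _ Href (U ui) ui (fun i => In i l)
             (HU ui)).
    + intros z Sz. destruct (classic (U ui z)) as [Uz|nU]; [left; auto|right].
      destruct (Hl z nU) as [i [Hi [k Ek]]]. exists i, k; auto.
    + auto.
    + intros z Sz nI. rewrite (Hcompl z zi nI nzi).
      exists (fun y => U ui y /\ ~ (exists i, In i l /\ exists k : K i, e (existT _ i k) = y)).
      split; [|split].
      * apply open_diff; auto. apply closed_list_union.
        intros i _. apply clopen_piece_image; auto.
      * split; auto. intros [i [_ [k Ek]]]. apply nzi. exists (existT (fun i => pt (K i)) i k); auto.
      * intros y [_ nE] i k Hi Ek. apply nE. exists i; split; auto. exists k; auto.
  - apply (lf_refinement_assemble e He HIm S I0 U _ _ Href (fun _ => False) u1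
             (fun _ => True) open_empty).
    + intros z Sz. right. destruct (classic (Im e z)) as [[[i k] <-]|nI].
      * exists i, k; auto.
      * exfalso; apply nA; eauto.
    + tauto.
    + intros z Sz nI. exfalso; apply nA; eauto.
Qed.

End CompactificationParacompact.

Lemma classA_paracompact_in (Z : space) : classA Z -> forall S : Z -> Prop, paracompact_in S.
Proof.
  induction 1 as [Z HZ|Z [x Hx]|I K Z e HK IH Hal]; intros S.
  - apply paracompact_in_empty. intros x; destruct (HZ x).
  - intros I U HU Hc. destruct (classic (S x)) as [Sx|nSx].
    + destruct (Hc x Sx) as [i0 Hi0]. exists unit, (fun _ => U i0).
      split; [intros; auto|split; [|split]].
      * intros y _. exists tt. rewrite (Hx y); auto.
      * intros _. exists i0; auto.
      * intros y _. exists (fun _ => True). split; [apply open_full|split; auto].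
        exists [tt]. intros [] _; simpl; auto.
    + apply paracompact_in_empty; auto; intros y Sy; rewrite (Hx y) in Sy; auto.
  - apply (paracompact_in_compactification e Hal); auto.
    intro i; apply classA_compact_hausdorff, HK.
Qed.

Section Good.
Context {X : space} (HX : compact X) (HH : hausdorff X).

Definition good (T : X -> Prop) := classA (subspace T).

Lemma good_ext T T' : good T -> (forall x, T x <-> T' x) -> good T'.
Proof.
  intros G E. replace T' with T; auto.
  apply functional_extensionality; intro; apply propositional_extensionality; auto.
Qed.

Lemma good_empty : good (fun _ => False).
Proof. apply A_empty. intros [x []]. Qed.

Lemma good_clopen_and T C : clopen T -> good T -> clopen C -> good (fun x => T x /\ C x).
Proof.
  intros HT G HC.
  apply (classA_clopen_embedding (subspace T) G (subspace (fun x => T x /\ C x))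
          (fun s => exist T (proj1_sig s) (proj1 (proj2_sig s)))).
  - apply compact_subspace; auto. apply closed_and; [apply HT|apply HC].
  - apply hausdorff_subspace; auto.
  - apply embedding_subspace_incl; auto.
  - apply clopen_ext with (fun t : subspace T => C (proj1_sig t)).
    + apply clopen_subspace_trace; auto.
    + intros [x Tx]; split.
      * intros Cx. exists (exist _ x (conj Tx Cx)). apply sig_eq; auto.
      * intros [[y [Ty Cy]] E]. apply (f_equal (@proj1_sig _ _)) in E. simpl in E.
        subst; auto.
Qed.

Lemma good_of_open_partition (W : X -> Prop) (I : Type) (P : I -> X -> Prop) :
  closed W -> (forall i x, P i x -> W x) -> (forall i, open (P i)) -> (forall i, good (P i)) ->
  (forall i j x, P i x -> P j x -> i = j) ->
  (forall x y, W x -> W y -> (forall i, ~ P i x) -> (forall i, ~ P i y) -> x = y) ->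
  good W.
Proof.
  intros HW HPW HPo HPg Hd Hc.
  apply (classA_of_open_pieces (subspace W) (compact_subspace W HX HW) (hausdorff_subspace W HH)
           I (fun i => subspace (P i)) HPg
           (fun i s => exist W (proj1_sig s) (HPW i _ (proj2_sig s)))).
  - intro i. apply embedding_subspace_incl; auto.
  - intro i. apply open_ext with (fun z : subspace W => P i (proj1_sig z)).
    + apply open_subspace_trace; auto.
    + intros [x Wx]; simpl; split.
      * intros Px. exists (exist _ x Px). apply sig_eq; auto.
      * intros [[y Py] E]. apply (f_equal (@proj1_sig _ _)) in E. simpl in E. subst; auto.
  - intros i j [x Px] [y Py] E. apply (f_equal (@proj1_sig _ _)) in E. simpl in E. subst y.
    assert (i = j) by (apply (Hd i j x); auto). subst j.
    f_equal. apply sig_eq; auto.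
  - intros [x Wx] [y Wy] H1 H2. apply sig_eq; simpl. apply Hc; auto.
    + intros i Px. apply (H1 i (exist _ x Px)). apply sig_eq; auto.
    + intros i Py. apply (H2 i (exist _ y Py)). apply sig_eq; auto.
Qed.

Lemma good_union T1 T2 : clopen T1 -> clopen T2 -> good T1 -> good T2 ->
  good (fun x => T1 x \/ T2 x).
Proof.
  intros C1 C2 G1 G2.
  apply (good_of_open_partition _ bool (fun b => if b then T1 else fun x => T2 x /\ ~ T1 x)).
  - apply closed_or; [apply C1|apply C2].
  - intros [|] x H; tauto.
  - intros [|]; [apply C1|]. apply open_diff; [apply C2|apply C1].
  - intros [|]; auto. apply good_clopen_and; auto. apply clopen_compl; auto.
  - intros [|] [|] x H1 H2; tauto.
  - intros x y [H|H] _ H1; exfalso.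
    + apply (H1 true); auto.
    + destruct (classic (T1 x)); [apply (H1 true)|apply (H1 false)]; auto.
Qed.

Lemma good_list_union (A : Type) (l : list A) (G : A -> X -> Prop) :
  (forall a, In a l -> clopen (G a) /\ good (G a)) ->
  clopen (fun x => exists a, In a l /\ G a x) /\ good (fun x => exists a, In a l /\ G a x).
Proof.
  induction l as [|a l IH]; intros H.
  - split.
    + apply clopen_ext with (fun _ => False); [apply clopen_empty|]. intro x; simpl; firstorder.
    + apply good_ext with (fun _ => False); [apply good_empty|]. intro x; simpl; firstorder.
  - destruct (H a (or_introl eq_refl)) as [Ca Ga].
    destruct IH as [Cl Gl]; [intros; apply H; simpl; auto|].
    assert (E : forall x, (G a x \/ exists b, In b l /\ G b x) <->
                          exists b, In b (a :: l) /\ G b x).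
    { intro x; simpl; split.
      - intros [Hx|[b [Hb Hx]]]; eauto.
      - intros [b [[<-|Hb] Hx]]; eauto. }
    split.
    + apply clopen_ext with (2 := E). apply clopen_or; auto.
    + apply good_ext with (2 := E). apply good_union; auto.
Qed.

Lemma classA_of_good_full : good (fun _ => True) -> classA X.
Proof.
  intros G. apply (classA_clopen_embedding _ G X (fun x => exist (fun _ : X => True) x I)); auto.
  - apply embedding_into_subspace; auto.
  - apply clopen_ext with (fun _ => True); [apply clopen_full|].
    intros [x []]; split; auto. intros _. exists x; auto.
Qed.

End Good.

(* [walk R a b n]: a walk of length at most [n] from [a] to [b]. *)
Inductive walk {J : Type} (R : J -> J -> Prop) (a : J) : J -> nat -> Prop :=
| walk_refl : walk R a a 0
| walk_weaken : forall b n, walk R a b n -> walk R a b (S n)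
| walk_step : forall b c n, walk R a b n -> R b c -> walk R a c (S n).

Section Walks.
Context {J : Type} (R : J -> J -> Prop).

Lemma clos_rt_sym_of_sym : (forall a b, R a b -> R b a) ->
  forall a b, clos_refl_trans J R a b -> clos_refl_trans J R b a.
Proof.
  intros Rsym a b. induction 1.
  - apply rt_step; auto.
  - apply rt_refl.
  - eapply rt_trans; eauto.
Qed.

Lemma walk_of_clos_rt a b : clos_refl_trans J R a b -> exists n, walk R a b n.
Proof.
  intros H. apply clos_rt_rtn1 in H. induction H as [|y z Hyz H IH].
  - exists 0; constructor.
  - destruct IH as [n Hn]. exists (S n). eapply walk_step; eauto.
Qed.

Lemma walk_mono a b n m : walk R a b n -> n <= m -> walk R a b m.
Proof. intros H Hle. induction Hle; auto. apply walk_weaken; auto. Qed.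

Lemma walk_finite : (forall a, exists l, forall b, R a b -> In b l) ->
  forall a n, exists l, forall b, walk R a b n -> In b l.
Proof.
  intros Rfin a n.
  assert (Hnbr : forall l : list J, exists L, forall m k, In m l -> R m k -> In k L).
  { induction l as [|c l IH].
    - exists nil. intros m k [].
    - destruct IH as [L HL]. destruct (Rfin c) as [lc Hlc]. exists (lc ++ L).
      intros m k [<-|Hm] Hmk; apply in_or_app; eauto. }
  induction n as [|n IH].
  - exists [a]. intros b H. inversion H; subst; simpl; auto.
  - destruct IH as [l Hl]. destruct (Hnbr l) as [L HL]. exists (l ++ L).
    intros b H. inversion H; subst; apply in_or_app; eauto.
Qed.

End Walks.

(* A locally compact paracompact space splits into clopen pieces, each a countable union
   of compact open sets: take a locally finite cover, group its members into chains of
   overlapping members, and layer each chain by distance from a chosen root. *)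
Section Layers.
Context {X : space} (HX : compact X) (HH : hausdorff X).
Context (Y : X -> Prop) {J : Type} (V H : J -> X -> Prop)
  (Vo : forall j, open (V j)) (VH : forall j x, V j x -> H j x)
  (Vcov : forall x, Y x -> exists j, V j x) (VY : forall j x, V j x -> Y x)
  (Hcl : forall j, clopen (H j)) (Hgood : forall j, good (H j))
  (HY : forall j x, H j x -> Y x).

Definition meets (a b : J) := exists x, V a x /\ V b x.

Context (meets_finite : forall a, exists l, forall b, meets a b -> In b l).

Definition linked := clos_refl_trans J meets.

Definition chain (b : J) (x : X) := exists k, linked b k /\ V k x.

Definition within (b : J) (n : nat) (x : X) := exists k, walk meets b k n /\ H k x /\ chain b x.

Definition layer (b : J) (n : nat) (x : X) :=
  within b n x /\ match n with 0 => True | S m => ~ within b m x end.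

Lemma linked_sym a b : linked a b -> linked b a.
Proof.
  apply clos_rt_sym_of_sym. intros c d [x [H1 H2]]; exists x; auto.
Qed.

Lemma linked_trans a b c : linked a b -> linked b c -> linked a c.
Proof. intros; eapply rt_trans; eauto. Qed.

Lemma chain_open b : open (chain b).
Proof. apply open_Union_cond; auto. Qed.

Lemma open_outside_chain b : open (fun x => Y x /\ ~ chain b x).
Proof.
  apply open_ext with (fun x => exists k, ~ linked b k /\ V k x); [apply open_Union_cond; auto|].
  intro x; split.
  - intros [k [nc Vx]]. split; eauto. intros [k' [ck' Vk'x]]. apply nc.
    apply linked_trans with k'; auto. apply rt_step. exists x; split; auto.
  - intros [Yx nE]. destruct (Vcov x Yx) as [k Vk]. exists k; split; auto.
    intro ck; apply nE; exists k; split; auto.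
Qed.

Lemma within_clopen b n : clopen (within b n).
Proof.
  destruct (walk_finite meets meets_finite b n) as [l Hl]. split.
  - apply open_Union_cond. intros k _. apply open_inter; [apply Hcl|apply chain_open].
  - apply (closed_fin_union J (fun k => walk meets b k n) l (fun k x => H k x /\ chain b x));
      auto.
    intros k _. apply closed_ext with (fun x => H k x /\ ~ (Y x /\ ~ chain b x)).
    + apply closed_diff; [apply Hcl|apply open_outside_chain].
    + intro x; split.
      * intros [Hk Hn]. split; auto. apply NNPP; intro nE; apply Hn; split; eauto.
      * intros [Hk Ex]. split; auto. intros [_ nE]; auto.
Qed.

Lemma layer_clopen b n : clopen (layer b n).
Proof.
  destruct n as [|m].
  - apply clopen_ext with (within b 0); [apply within_clopen|]. intro; unfold layer; tauto.
  - apply clopen_and; [apply within_clopen|apply clopen_compl, within_clopen].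
Qed.

Lemma layer_Y b n x : layer b n x -> Y x.
Proof. intros [[k [_ [Hk _]]] _]. eauto. Qed.

Lemma layer_chain b n x : layer b n x -> chain b x.
Proof. intros [[k [_ [_ Ex]]] _]; auto. Qed.

Lemma layer_good b n : good (layer b n).
Proof.
  destruct (walk_finite meets meets_finite b n) as [l Hl].
  destruct (good_list_union HX HH J l H) as [UC UG]; [intros; split; auto|].
  apply good_ext with (fun x => (fun x => exists k, In k l /\ H k x) x /\ layer b n x).
  - apply good_clopen_and; auto. apply layer_clopen.
  - intro x; split; [tauto|]. intros Hx; split; auto.
    destruct Hx as [[k [Hk [HHk _]]] _]. exists k; split; auto.
Qed.

Lemma within_mono b m n x : m <= n -> within b m x -> within b n x.
Proof. intros Hle [k [Hr Hk]]. exists k; split; auto. apply walk_mono with m; auto. Qed.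

Lemma layer_of_within b n x : within b n x -> exists m, layer b m x.
Proof.
  induction n as [|n IH]; intros Hq.
  - exists 0; split; auto.
  - destruct (classic (within b n x)) as [Hq'|nq]; auto. exists (S n); split; auto.
Qed.

Lemma layer_unique b n m x : layer b n x -> layer b m x -> n = m.
Proof.
  intros [Hn Hn'] [Hm Hm'].
  destruct (PeanoNat.Nat.lt_trichotomy n m) as [lt|[eq|gt]]; auto; exfalso.
  - destruct m as [|m]; [lia|]. apply Hm'. apply within_mono with n; auto; lia.
  - destruct n as [|n]; [lia|]. apply Hn'. apply within_mono with m; auto; lia.
Qed.

Definition root (j : J) : J := epsilon (inhabits j) (fun b => linked j b).

Lemma linked_root j : linked j (root j).
Proof. apply (epsilon_spec (inhabits j) (fun b => linked j b)). exists j. apply rt_refl. Qed.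

Lemma root_linked j k : linked j k -> root j = root k.
Proof.
  intros Hjk. unfold root.
  replace (fun b => linked k b) with (fun b => linked j b).
  - f_equal. apply proof_irrelevance.
  - apply functional_extensionality; intro b; apply propositional_extensionality; split.
    + intros; apply linked_trans with j; auto. apply linked_sym; auto.
    + intros; apply linked_trans with k; auto.
Qed.

Lemma root_chain j k x : chain (root j) x -> chain (root k) x -> root j = root k.
Proof.
  intros [k1 [c1 V1]] [k2 [c2 V2]]. apply root_linked.
  apply linked_trans with (root j); [apply linked_root|].
  apply linked_trans with k1; auto. apply linked_trans with k2.
  - apply rt_step. exists x; auto.
  - apply linked_trans with (root k); [apply linked_sym; auto|apply linked_sym, linked_root].
Qed.

Lemma layer_cover x : Y x -> exists j n, layer (root j) n x.
Proof.
  intros Yx. destruct (Vcov x Yx) as [k Vk].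
  destruct (walk_of_clos_rt meets _ _ (linked_sym _ _ (linked_root k))) as [n Hr].
  destruct (layer_of_within (root k) n x) as [m Hm].
  - exists k; split; auto; split; auto. exists k; split; auto. apply linked_sym, linked_root.
  - exists k, m; auto.
Qed.

End Layers.

Lemma compact_meets_finitely {X : space} (Y C : X -> Prop) {J : Type} (V : J -> X -> Prop) :
  compact_set C -> (forall x, C x -> Y x) ->
  (forall x, Y x -> exists W, open W /\ W x /\ exists l : list J,
      forall j, (exists y, Y y /\ W y /\ V j y) -> In j l) ->
  exists l, forall j, (exists x, C x /\ Y x /\ V j x) -> In j l.
Proof.
  intros HC HCY Hlf.
  destruct (HC {q : (X -> Prop) * list J | open (fst q) /\
               forall j, (exists y, Y y /\ fst q y /\ V j y) -> In j (snd q)}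
               (fun q => fst (proj1_sig q))) as [L HL].
  - intros [q Hq]; apply Hq.
  - intros x Cx. destruct (Hlf x (HCY x Cx)) as [W [HW [Wx [l Hl]]]].
    exists (exist _ (W, l) (conj HW Hl)); simpl; auto.
  - exists (flat_map (fun q => snd (proj1_sig q)) L).
    intros j [x [Cx [Yx Vx]]]. destruct (HL x Cx) as [q [Hq Hqx]].
    apply in_flat_map. exists q; split; auto.
    destruct q as [q Hq2]; simpl in *. apply (proj2 Hq2). exists x; auto.
Qed.

Section Backward.
Context {X : space} (HX : compact X) (HH : hausdorff X) (HP : hereditarily_paracompact X).

Lemma good_of_punctured_good_cover (W0 Y : X -> Prop) (p : X) {J : Type}
  (V T : J -> X -> Prop) :
  clopen W0 -> (forall x, Y x <-> W0 x /\ x <> p) ->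
  (forall j, open (V j)) -> (forall x, Y x -> exists j, V j x) ->
  (forall j x, V j x -> T j x) ->
  (forall j, clopen (T j)) -> (forall j, good (T j)) -> (forall j x, T j x -> Y x) ->
  (forall x, Y x -> exists W, open W /\ W x /\ exists l : list J,
      forall j, (exists y, Y y /\ W y /\ V j y) -> In j l) ->
  good W0.
Proof.
  intros HW0 HY Vo Vcov VT Tcl Tgood TY Vlf.
  assert (VY : forall j x, V j x -> Y x) by eauto.
  assert (Vfin : forall a, exists l, forall b, meets V a b -> In b l).
  { intro a.
    destruct (compact_meets_finitely Y (T a) V
                (compact_closed_set _ HX (proj2 (Tcl a))) (TY a) Vlf) as [l Hl].
    exists l. intros b [x [Vax Vbx]]. apply Hl. exists x; split; [apply VT|]; eauto. }
  pose (Il := {P : X -> Prop | exists j n, P = layer V T (root V j) n}).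
  apply (good_of_open_partition HX HH W0 Il (fun i => proj1_sig i)).
  - apply HW0.
  - intros [P [j [n ->]]] x Hx. apply HY, (layer_Y Y V T TY _ _ _ Hx).
  - intros [P [j [n ->]]]. apply (layer_clopen Y V T Vo Vcov VY Tcl TY Vfin).
  - intros [P [j [n ->]]]. apply (layer_good HX HH Y V T Vo Vcov VY Tcl Tgood TY Vfin).
  - intros [P1 [j1 [n1 E1]]] [P2 [j2 [n2 E2]]] x H1 H2; simpl in *. subst P1 P2.
    assert (Hb : root V j1 = root V j2)
      by (apply root_chain with x; eapply layer_chain; eauto).
    rewrite Hb in H1. assert (n1 = n2) by (eapply layer_unique; eauto). subst n2.
    apply sig_eq; simpl. rewrite Hb; auto.
  - assert (Hp : forall z, W0 z -> (forall i : Il, ~ proj1_sig i z) -> z = p).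
    { intros z W0z Hn. apply NNPP; intro nzp.
      destruct (layer_cover Y V T VT Vcov z (proj2 (HY z) (conj W0z nzp))) as [j [n Hl]].
      apply (Hn (exist _ (layer V T (root V j) n) (ex_intro _ j (ex_intro _ n eq_refl))));
        auto. }
    intros x y W0x W0y Hx Hy. rewrite (Hp x), (Hp y); auto.
Qed.

Lemma good_of_good_punctured (W0 : X -> Prop) (p : X) : clopen W0 ->
  (forall y, W0 y -> y <> p ->
     exists T, clopen T /\ T y /\ good T /\ forall z, T z -> W0 z /\ z <> p) ->
  good W0.
Proof.
  intros HW0 Hgn.
  pose (Y := fun x => W0 x /\ x <> p).
  pose (Ig := {T : X -> Prop | clopen T /\ good T /\ forall z, T z -> Y z}).
  destruct (proj1 (paracompact_subspaceP Y) (HP Y) Ig (fun t => proj1_sig t))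
    as [J [V [Vo [Vc [Vr Vl]]]]].
  { intros [T HT]. apply (proj1 (proj1 HT)). }
  { intros x [W0x nxp]. destruct (Hgn x W0x nxp) as [T [HC [Hx [HG HY]]]].
    exists (exist _ T (conj HC (conj HG HY))); simpl; auto. }
  pose (T := fun j => proj1_sig (constructive_indefinite_description _ (Vr j))).
  assert (HYo : open Y) by (apply open_inter; [apply HW0|apply (closed_point p HH)]).
  apply (good_of_punctured_good_cover W0 Y p (fun j x => Y x /\ V j x)
           (fun j => proj1_sig (T j)) HW0).
  - intro x; reflexivity.
  - intro j; apply open_inter; auto.
  - intros x Yx. destruct (Vc x Yx) as [j Vj]. exists j; split; auto.
  - intros j x [Yx Vx]. exact (proj2_sig (constructive_indefinite_description _ (Vr j)) x Yx Vx).
  - intro j; apply (proj2_sig (T j)).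
  - intro j; apply (proj2_sig (T j)).
  - intro j; apply (proj2_sig (T j)).
  - intros x Yx. destruct (Vl x Yx) as [W [HW [Wx [l Hl]]]].
    exists W; split; [|split]; auto. exists l.
    intros j [y [Yy [Wy [_ Vy]]]]. apply Hl; eauto.
Qed.

(* A scattered space has no nonempty set of points without good clopen neighbourhoods:
   at an isolated point p of such a set, the punctured neighbourhood is covered by good
   clopen sets, and the previous lemma applies. *)
Lemma good_clopen_nbhd (HS : scattered X) x : exists T : X -> Prop, clopen T /\ T x /\ good T.
Proof.
  apply NNPP; intro Hx.
  destruct (HS (fun x => ~ exists T : X -> Prop, clopen T /\ T x /\ good T) (ex_intro _ x Hx))
    as [p [Cp [O [HO [Op Hiso]]]]].
  destruct (clopen_nbhd_basis HX HH HS p O HO Op) as [W0 [HW0 [W0p HW0O]]].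
  apply Cp. exists W0; split; [auto|split; auto].
  apply (good_of_good_punctured W0 p HW0).
  intros y W0y nyp.
  assert (Gy : exists T : X -> Prop, clopen T /\ T y /\ good T).
  { apply NNPP; intro nG. apply nyp. apply Hiso; auto. }
  destruct Gy as [T [HT [Ty GT]]].
  destruct (clopen_separation HX HH HS y p nyp) as [C [HC [Cy nCp]]].
  exists (fun z => T z /\ (C z /\ W0 z)).
  split; [apply clopen_and; auto; apply clopen_and; auto|]. split; [auto|]. split.
  - apply good_clopen_and; auto. apply clopen_and; auto.
  - intros z [_ [Cz W0z]]. split; auto; intro; subst; auto.
Qed.

Lemma classA_of_scattered_hereditarily_paracompact (HS : scattered X) : classA X.
Proof.
  destruct (HX {T : X -> Prop | clopen T /\ good T} (fun t => proj1_sig t)) as [l Hl].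
  - intros [T HT]. apply (proj1 (proj1 HT)).
  - intro x. destruct (good_clopen_nbhd HS x) as [T [HT [Tx GT]]].
    exists (exist _ T (conj HT GT)); auto.
  - destruct (good_list_union HX HH _ l (fun t => proj1_sig t)) as [_ G].
    { intros [T HT] _; auto. }
    apply (classA_of_good_full HX HH). apply good_ext with (1 := G).
    intro x; split; auto; intros _; apply Hl.
Qed.

End Backward.

Theorem lemma3 (X : space) (Hc : compact X) (Hh : hausdorff X) :
  classA X <-> scattered X /\ hereditarily_paracompact X.
Proof.
  split.
  - intros HA. split; [apply classA_scattered; auto|].
    intro S. apply paracompact_subspaceP, classA_paracompact_in; auto.
  - intros [Hs Hp]. apply classA_of_scattered_hereditarily_paracompact; auto.
Qed.
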